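(* Let $\nu\in P$ and let $F:[0,1]\cap\mathbb Q\to\mathbb Q$ be a piecewise linear continuous map with $F(0)=0$ and $F(1)\in a_0^{-1}\mathbb Z$. Then the path $t\mapsto t\nu+F(t)\delta$ is extremal.
   Context: $\mathfrak g$ is an affine Lie algebra over $\mathbb Q$ of affine type with index set $I$, simple coroots $h_j$, fundamental weights $\Lambda_j$, null root $\delta$, $a_0=2$ if $\mathfrak g$ is of type $A^{(2)}_{2\ell}$ and $a_0=1$ otherwise, Weyl group $W=\langle r_j\mid j\in I\rangle$, weight lattice $P=\bigoplus_j\mathbb Z\Lambda_j\oplus\mathbb Za_0^{-1}\delta$. $\mathbb P$ is the set of piecewise linear continuous maps $\pi:[0,1]\cap\mathbb Q\to\mathbb Q\otimes P$ with $\pi(0)=0$, $\pi(1)\in P$. $e_j,f_j$ ($j\in I$) are Littelmann's root operators on $\mathbb P\cup\{\mathbf0\}$. For $j\in I$, $S_j\pi=f_j^n\pi$ if $n=\pi(1)(h_j)\ge0$ and $S_j\pi=e_j^{-n}\pi$ if $n<0$; $w\mapsto S_w$ is the action of $W$ on $\mathbb P$ with $S_{r_j}=S_j$. A path $\pi\in\mathbb P$ is extremal if for every $w\in W$ and every $j\in I$, either $e_jS_w\pi=\mathbf0$ or $f_jS_w\pi=\mathbf0$. *)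

From Stdlib Require Import Classical ClassicalEpsilon.
From HB Require Import structures.
From mathcomp Require Import all_boot all_order all_algebra.
Set Implicit Arguments. Unset Strict Implicit. Unset Printing Implicit Defensive.
Import Order.TTheory GRing.Theory Num.Theory.
Local Open Scope ring_scope.

Definition the_min (P : rat -> Prop) : option rat :=
  match excluded_middle_informative
          (exists x : rat, P x /\ forall y, P y -> x <= y) with
  | left h => Some (proj1_sig (constructive_indefinite_description _ h))
  | right _ => None
  end.

Definition the_max (P : rat -> Prop) : option rat :=
  match excluded_middle_informative
          (exists x : rat, P x /\ forall y, P y -> y <= x) with
  | left h => Some (proj1_sig (constructive_indefinite_description _ h))
  | right _ => None
  end.

(* Index set I = {0,...,n} = 'I_n.+1, the distinguished node is ord0. *)
Definition is_GCM (n : nat) (A : 'M[int]_n.+1) : Prop :=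
  (forall i, A i i = 2) /\
  (forall i j, i != j -> A i j <= 0) /\
  (forall i j, (A i j == 0) = (A j i == 0)).

Definition indecomposable (n : nat) (A : 'M[int]_n.+1) : Prop :=
  forall J : {set 'I_n.+1}, J != set0 -> J != setT ->
    exists i j, [/\ i \in J, j \notin J & A i j != 0].

Definition affine_type (n : nat) (A : 'M[int]_n.+1) : Prop :=
  let Aq := map_mx (fun z : int => z%:~R : rat) A in
  [/\ \rank Aq = n,
      exists u : 'cV[rat]_n.+1, (forall i, 0 < u i 0) /\ Aq *m u = 0 &
      forall v : 'cV[rat]_n.+1, (forall i, 0 <= (Aq *m v) i 0) -> Aq *m v = 0].

Definition affine_GCM (n : nat) (A : 'M[int]_n.+1) : Prop :=
  [/\ is_GCM A, indecomposable A & affine_type A].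

Definition prim_null (n : nat) (A : 'M[int]_n.+1) (a : 'I_n.+1 -> nat) : Prop :=
  [/\ forall i, (0 < a i)%N,
      forall i, \sum_j A i j * (a j)%:Z = 0 &
      \big[gcdn/0%N]_i a i = 1%N].

(* Kac's numbering of the node 0 and the number a_0:
   a = labels (delta = sum a_i alpha_i), av = dual labels (K = sum av_i h_i);
   node 0 has av_0 = 1, a0 = a_0, and a0 = 1 unless no node has a_i = av_i = 1
   (which happens exactly for type A^(2)_(2l), where a_0 = 2). *)
Definition kac_a0 (n : nat) (A : 'M[int]_n.+1) (a0 : nat) : Prop :=
  exists a av : 'I_n.+1 -> nat,
    [/\ prim_null A a, prim_null A^T av, av ord0 = 1%N, a ord0 = a0 &
        (a0 = 1%N \/ ~ exists i, a i = 1%N /\ av i = 1%N)].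

(* An element of Q (x) P is sum_j lam_j Lambda_j + c delta, stored as (lam, c). *)
Notation wt n := ({ffun 'I_n.+1 -> rat^o} * rat^o)%type.

Definition delta (n : nat) : wt n := (0, 1).

(* pairing with the simple coroot h_j: <Lambda_i,h_j> = [i==j], <delta,h_j> = 0 *)
Definition pair_h (n : nat) (j : 'I_n.+1) (x : wt n) : rat := x.1 j.

Definition in_P (n : nat) (a0 : nat) (x : wt n) : Prop :=
  (forall j, exists z : int, x.1 j = z%:~R) /\
  exists z : int, x.2 = z%:~R / a0%:R.

Definition alpha (n : nat) (A : 'M[int]_n.+1) (a0 : nat) (j : 'I_n.+1) : wt n :=
  ([ffun i => (A i j)%:~R], if j == ord0 then a0%:R^-1 else 0).

Definition refl (n : nat) (A : 'M[int]_n.+1) (a0 : nat) (j : 'I_n.+1) (x : wt n)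
  : wt n := x - pair_h j x *: alpha A a0 j.

Definition piecewise_linear (V : lmodType rat) (p : rat -> V) : Prop :=
  exists s : seq rat,
    [/\ path <%R 0 s, last 0 s = 1 &
        forall a b, (a, b) \in zip (0 :: s) s ->
          forall t, a <= t <= b ->
            p t = p a + ((t - a) / (b - a)) *: (p b - p a)].

Notation lpath n := (rat -> wt n).

Definition is_path (n : nat) (a0 : nat) (p : lpath n) : Prop :=
  [/\ piecewise_linear p, p 0 = 0 & in_P a0 (p 1)].

Definition Hfun (n : nat) (j : 'I_n.+1) (p : lpath n) (t : rat) : rat :=
  pair_h j (p t).

Definition minH (n : nat) (j : 'I_n.+1) (p : lpath n) : option rat :=
  the_min (fun x => exists t, 0 <= t <= 1 /\ Hfun j p t = x).

Definition e_op (n : nat) (A : 'M[int]_n.+1) (a0 : nat) (j : 'I_n.+1)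
  (p : lpath n) : option (lpath n) :=
  match minH j p with
  | None => None
  | Some m =>
    if -1 < m then None else
    match the_min (fun t => 0 <= t <= 1 /\ Hfun j p t = m) with
    | None => None
    | Some t1 =>
      match the_max (fun t => 0 <= t <= t1 /\ Hfun j p t = m + 1) with
      | None => None
      | Some t0 =>
        Some (fun t => if t <= t0 then p t
                       else if t <= t1 then p t0 + refl A a0 j (p t - p t0)
                       else p t + alpha A a0 j)
      end
    end
  end.

Definition f_op (n : nat) (A : 'M[int]_n.+1) (a0 : nat) (j : 'I_n.+1)
  (p : lpath n) : option (lpath n) :=
  match minH j p with
  | None => None
  | Some m =>
    if Hfun j p 1 - m < 1 then None else
    match the_max (fun t => 0 <= t <= 1 /\ Hfun j p t = m) with
    | None => None
    | Some t0 =>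
      match the_min (fun t => t0 <= t <= 1 /\ Hfun j p t = m + 1) with
      | None => None
      | Some t1 =>
        Some (fun t => if t <= t0 then p t
                       else if t <= t1 then p t0 + refl A a0 j (p t - p t0)
                       else p t - alpha A a0 j)
      end
    end
  end.

Fixpoint iter_op (n : nat) (g : lpath n -> option (lpath n)) (k : nat)
  (p : lpath n) : option (lpath n) :=
  match k with
  | 0 => Some p
  | k.+1 => obind g (iter_op g k p)
  end.

Definition S_op (n : nat) (A : 'M[int]_n.+1) (a0 : nat) (j : 'I_n.+1)
  (p : lpath n) : option (lpath n) :=
  let N := numq (pair_h j (p 1)) in
  if (0 <= N)%R then iter_op (f_op A a0 j) `|N|%N p
  else iter_op (e_op A a0 j) `|N|%N p.

(* S_w for w = r_{j_1} ... r_{j_k}, given as the word [:: j_1; ...; j_k] *)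
Definition S_word (n : nat) (A : 'M[int]_n.+1) (a0 : nat) (w : seq 'I_n.+1)
  (p : lpath n) : option (lpath n) :=
  foldr (fun j acc => obind (S_op A a0 j) acc) (Some p) w.

Definition extremal (n : nat) (A : 'M[int]_n.+1) (a0 : nat) (p : lpath n) : Prop :=
  forall (w : seq 'I_n.+1) (j : 'I_n.+1) (q : lpath n),
    S_word A a0 w p = Some q -> e_op A a0 j q = None \/ f_op A a0 j q = None.

From Stdlib Require Import ClassicalEpsilon.
From HB Require Import structures.
From mathcomp Require Import all_boot all_order all_algebra ring lra.
Import Order.TTheory GRing.Theory Num.Theory.
Set Implicit Arguments. Unset Strict Implicit.
Local Open Scope ring_scope.

(* Since <delta, h_j> = 0, the h_j-coordinate of t |-> t mu + F(t) delta is the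
   linear function t <mu, h_j>, and the root operators e_j, f_j only read that
   coordinate: they treat the path as the straight line t |-> t mu and carry
   F(t) delta along.  If <mu, h_j> = M > 0, then f_j^k of that line has h_j-graph
   |t M - k| - k on [0, 1]; each f_j reflects the piece [k/M, (k+1)/M] and
   translates the rest by -alpha_j, and after M steps the path is
   t |-> t r_j(mu) + F(t) delta.  Dually for e_j when M < 0.  Hence S_w maps the
   path to one of the same shape with mu replaced by w(mu), and for a straight
   line the minimum of the h_j-graph is at an endpoint, so e_j or f_j kills it.
   Paths are only compared on [0, 1]: the operators never read them elsewhere. *)

Definition is_least (P : rat -> Prop) (x : rat) := P x /\ forall y, P y -> x <= y.
Definition is_greatest (P : rat -> Prop) (x : rat) := P x /\ forall y, P y -> y <= x.

Lemma the_min_eq P x : is_least P x -> the_min P = Some x.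
Proof.
move=> [Px Hx]; rewrite /the_min.
case: excluded_middle_informative => [h|[]]; last by exists x.
case: constructive_indefinite_description => y [Py Hy] /=.
by congr Some; apply/le_anti; rewrite Hx // Hy.
Qed.

Lemma the_max_eq P x : is_greatest P x -> the_max P = Some x.
Proof.
move=> [Px Hx]; rewrite /the_max.
case: excluded_middle_informative => [h|[]]; last by exists x.
case: constructive_indefinite_description => y [Py Hy] /=.
by congr Some; apply/le_anti; rewrite Hx // Hy.
Qed.

Definition vshape (M b t : rat) : rat := `|t * M - b| - b.

Lemma vshapeE M b t :
  vshape M b t = if t * M <= b then - (t * M) else t * M - 2 * b.
Proof.
by rewrite /vshape; case: leP => ?; [rewrite ler0_norm | rewrite gtr0_norm]; lra.
Qed.

Definition hbend (h : rat -> rat) (t0 t1 e : rat) (t : rat) : rat :=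
  if t <= t0 then h t else if t <= t1 then 2 * h t0 - h t else h t + 2 * e.

Lemma hbend_vshape_f M b : 0 < M ->
  hbend (vshape M b) (b / M) ((b + 1) / M) (-1) =1 vshape M (b + 1).
Proof.
move=> M_gt0 t; rewrite /hbend !vshapeE divfK ?gt_eqF // lexx !ler_pdivlMr //.
by do ![case: leP => ?]; lra.
Qed.

Lemma hbend_vshape_e M b : 0 < M ->
  hbend (vshape M (b + 1)) (b / M) ((b + 1) / M) 1 =1 vshape M b.
Proof.
move=> M_gt0 t; rewrite /hbend !vshapeE divfK ?gt_eqF // !ler_pdivlMr //.
by do ![case: leP => ?]; lra.
Qed.

Lemma vshape_bottom M t : 0 <= M -> 0 <= t -> vshape M 0 t = t * M.
Proof. by move=> M_ge0 t_ge0; rewrite vshapeE; case: leP => ?; nra. Qed.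

Lemma vshape_top M t : 0 <= M -> t <= 1 -> vshape M M t = - (t * M).
Proof. by move=> M_ge0 t_le1; rewrite vshapeE; case: leP => ?; nra. Qed.

Lemma div_in01 (M c : rat) : 0 < M -> 0 <= c <= M -> 0 <= c / M <= 1.
Proof.
move=> M_gt0 /andP[c_ge0 cM]; apply/andP; split; first exact: divr_ge0 (ltW M_gt0).
by rewrite ler_pdivrMr ?mul1r.
Qed.

Section RootOperators.
Variables (n : nat) (A : 'M[int]_n.+1) (a0 : nat) (j : 'I_n.+1).
Local Notation alpha_j := (alpha A a0 j).

Definition bend (q : lpath n) (t0 t1 : rat) (v : wt n) : lpath n := fun t =>
  if t <= t0 then q t else if t <= t1 then q t0 + refl A a0 j (q t - q t0)
  else q t + v.

Lemma f_op_bend q m t0 t1 :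
  is_least (fun x => exists t, 0 <= t <= 1 /\ Hfun j q t = x) m ->
  1 <= Hfun j q 1 - m ->
  is_greatest (fun t => 0 <= t <= 1 /\ Hfun j q t = m) t0 ->
  is_least (fun t => t0 <= t <= 1 /\ Hfun j q t = m + 1) t1 ->
  f_op A a0 j q = Some (bend q t0 t1 (- alpha_j)).
Proof.
move=> Hm H1 Ht0 Ht1.
by rewrite /f_op /minH (the_min_eq Hm) ltNge H1 (the_max_eq Ht0) (the_min_eq Ht1).
Qed.

Lemma e_op_bend q m t0 t1 :
  is_least (fun x => exists t, 0 <= t <= 1 /\ Hfun j q t = x) m ->
  m <= -1 ->
  is_least (fun t => 0 <= t <= 1 /\ Hfun j q t = m) t1 ->
  is_greatest (fun t => 0 <= t <= t1 /\ Hfun j q t = m + 1) t0 ->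
  e_op A a0 j q = Some (bend q t0 t1 alpha_j).
Proof.
move=> Hm H1 Ht1 Ht0.
by rewrite /e_op /minH (the_min_eq Hm) ltNge H1 (the_min_eq Ht1) (the_max_eq Ht0).
Qed.

Lemma eq_in_bend p q t0 t1 v : t0 \in `[0, 1] -> {in `[0, 1], p =1 q} ->
  {in `[0, 1], bend p t0 t1 v =1 bend q t0 t1 v}.
Proof. by move=> t0_01 pq t t_01; rewrite /bend !pq. Qed.

Lemma f_op_vshape q M b : 0 < M -> 0 <= b -> b + 1 <= M ->
  {in `[0, 1], Hfun j q =1 vshape M b} ->
  f_op A a0 j q = Some (bend q (b / M) ((b + 1) / M) (- alpha_j)).
Proof.
move=> M_gt0 b_ge0 bM Hq.
have knotK c : c / M * M = c by rewrite divfK ?gt_eqF.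
have knot0_01 : 0 <= b / M <= 1 by apply: div_in01; rewrite // b_ge0; lra.
have knot1_01 : 0 <= (b + 1) / M <= 1.
  by apply: div_in01; rewrite // bM andbT; lra.
have in01 t : 0 <= t <= 1 -> t \in `[0, 1] by rewrite in_itv.
apply: (f_op_bend (m := - b)).
- split; first by exists (b / M); rewrite Hq ?in01 // vshapeE knotK lexx.
  move=> _ [t [t01 <-]]; rewrite Hq ?in01 // vshapeE.
  by case: (leP (t * M) b) => ?; lra.
- by rewrite Hq ?in01 ?lexx ?ler01 // vshapeE mul1r; case: (leP M b) => ?; lra.
- split; first by rewrite knot0_01 Hq ?in01 // vshapeE knotK lexx.
  move=> t [t01]; rewrite Hq ?in01 // vshapeE ler_pdivlMr //.
  by case: (leP (t * M) b) => ?; lra.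
split; first split.
- rewrite ler_pdivlMr // knotK; case/andP: knot1_01 => _ ->.
  by rewrite andbT; lra.
- by rewrite Hq ?in01 // vshapeE knotK; case: (leP (b + 1) b) => ?; lra.
move=> t [/andP[t0t t1]].
have t01 : 0 <= t <= 1.
  by rewrite t1 andbT; apply: le_trans t0t; case/andP: knot0_01.
move: t0t; rewrite Hq ?in01 // vshapeE !ler_pdivrMr //.
by case: (leP (t * M) b) => ?; lra.
Qed.

Lemma e_op_vshape q M b : 0 < M -> 0 <= b -> b + 1 <= M ->
  {in `[0, 1], Hfun j q =1 vshape M (b + 1)} ->
  e_op A a0 j q = Some (bend q (b / M) ((b + 1) / M) alpha_j).
Proof.
move=> M_gt0 b_ge0 bM Hq.
have knotK c : c / M * M = c by rewrite divfK ?gt_eqF.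
have knot0_01 : 0 <= b / M <= 1 by apply: div_in01; rewrite // b_ge0; lra.
have knot1_01 : 0 <= (b + 1) / M <= 1.
  by apply: div_in01; rewrite // bM andbT; lra.
have in01 t : 0 <= t <= 1 -> t \in `[0, 1] by rewrite in_itv.
apply: (e_op_bend (m := - (b + 1))).
- split; first by exists ((b + 1) / M); rewrite Hq ?in01 // vshapeE knotK lexx.
  move=> _ [t [t01 <-]]; rewrite Hq ?in01 // vshapeE.
  by case: (leP (t * M) (b + 1)) => ?; lra.
- lra.
- split; first by rewrite knot1_01 Hq ?in01 // vshapeE knotK lexx.
  move=> t [t01]; rewrite Hq ?in01 // vshapeE ler_pdivrMr //.
  by case: (leP (t * M) (b + 1)) => ?; lra.
split; first split.
- by case/andP: knot0_01 => -> _ /=; rewrite ler_pdivlMr // knotK; lra.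
- by rewrite Hq ?in01 // vshapeE knotK; case: (leP b (b + 1)) => ?; lra.
move=> t [/andP[t0 t1t]].
have t01 : 0 <= t <= 1.
  by rewrite t0 /=; apply: le_trans t1t _; case/andP: knot1_01.
move: t1t; rewrite Hq ?in01 // vshapeE !ler_pdivlMr //.
by case: (leP (t * M) (b + 1)) => ?; lra.
Qed.

Lemma pair_hD (x y : wt n) : pair_h j (x + y) = pair_h j x + pair_h j y.
Proof. by rewrite /pair_h /= ffunE. Qed.

Lemma pair_hB (x y : wt n) : pair_h j (x - y) = pair_h j x - pair_h j y.
Proof. by rewrite /pair_h /= !ffunE. Qed.

Lemma pair_hZ c (x : wt n) : pair_h j (c *: x) = c * pair_h j x.
Proof. by rewrite /pair_h /= ffunE. Qed.

Lemma pair_h_delta : pair_h j (delta n) = 0.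
Proof. by rewrite /pair_h /= ffunE. Qed.

Lemma pair_h_alpha : pair_h j alpha_j = (A j j)%:~R.
Proof. by rewrite /pair_h /= ffunE. Qed.

Lemma add_refl_sub (x y : wt n) :
  x + refl A a0 j (y - x) = y - pair_h j (y - x) *: alpha_j.
Proof. by rewrite /refl addrA [x + _]addrC subrK. Qed.

Definition integral_weight (x : wt n) : Prop :=
  forall i, exists z : int, x.1 i = z%:~R.

Lemma integral_refl x : integral_weight x -> integral_weight (refl A a0 j x).
Proof.
move=> x_int i; have [[zi xi] [zj xj]] := (x_int i, x_int j).
by exists (zi - zj * A i j); rewrite /refl /= !ffunE /pair_h xi xj rmorphB rmorphM.
Qed.

Definition line_path (mu : wt n) (F : rat -> rat^o) : lpath n :=
  fun t => t *: mu + F t *: delta n.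

Definition line_with_height mu F (h : rat -> rat) : lpath n :=
  fun t => line_path mu F t - ((t * pair_h j mu - h t) / 2) *: alpha_j.

Lemma eq_in_line_with_height (D : {pred rat}) mu F h1 h2 : {in D, h1 =1 h2} ->
  {in D, line_with_height mu F h1 =1 line_with_height mu F h2}.
Proof. by move=> h12 t tD; rewrite /line_with_height h12. Qed.

Lemma line_with_height_line mu F :
  line_with_height mu F (fun t => t * pair_h j mu) =1 line_path mu F.
Proof. by move=> t; rewrite /line_with_height subrr mul0r scale0r subr0. Qed.

Lemma line_with_height_refl mu F :
  line_with_height mu F (fun t => - (t * pair_h j mu)) =1
  line_path (refl A a0 j mu) F.
Proof.
move=> t; rewrite /line_with_height /line_path /refl scalerBr scalerA addrAC.
suff -> : (t * pair_h j mu - - (t * pair_h j mu)) / 2 = t * pair_h j mu by [].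
by field.
Qed.

Hypothesis Ajj : A j j = 2.

Lemma pair_h_line_with_height mu F h t :
  pair_h j (line_with_height mu F h t) = h t.
Proof.
rewrite /line_with_height /line_path pair_hB pair_hD !pair_hZ.
by rewrite pair_h_delta pair_h_alpha Ajj; field.
Qed.

Lemma bend_line_with_height mu F h t0 t1 e :
  bend (line_with_height mu F h) t0 t1 (e *: alpha_j) =1
  line_with_height mu F (hbend h t0 t1 e).
Proof.
move=> t; rewrite /bend [RHS]/line_with_height /hbend.
case: ifP => [_ //|_]; case: ifP => _.
  rewrite add_refl_sub pair_hB !pair_h_line_with_height /line_with_height.
  by rewrite -addrA -opprD -scalerDl; congr (_ - _ *: _); field.
rewrite /line_with_height -addrA [- _ + _]addrC -opprB -scalerBl.
by congr (_ - _ *: _); field.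
Qed.

Lemma pair_h_line_path mu F t : pair_h j (line_path mu F t) = t * pair_h j mu.
Proof. by rewrite -line_with_height_line pair_h_line_with_height. Qed.

Lemma f_op_line_with_vshape mu F M b q : 0 < M -> 0 <= b -> b + 1 <= M ->
  {in `[0, 1], q =1 line_with_height mu F (vshape M b)} ->
  exists2 q', f_op A a0 j q = Some q' &
    {in `[0, 1], q' =1 line_with_height mu F (vshape M (b + 1))}.
Proof.
move=> M_gt0 b_ge0 bM Hq.
rewrite (f_op_vshape M_gt0 b_ge0 bM) => [|t t01]; last first.
  by rewrite /Hfun Hq // pair_h_line_with_height.
eexists => // t t01; rewrite (eq_in_bend _ _ _ Hq) //; last first.
  by rewrite in_itv div_in01 // b_ge0; lra.
rewrite -[- alpha_j]scaleN1r bend_line_with_height.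
by rewrite /line_with_height hbend_vshape_f.
Qed.

Lemma e_op_line_with_vshape mu F M b q : 0 < M -> 0 <= b -> b + 1 <= M ->
  {in `[0, 1], q =1 line_with_height mu F (vshape M (b + 1))} ->
  exists2 q', e_op A a0 j q = Some q' &
    {in `[0, 1], q' =1 line_with_height mu F (vshape M b)}.
Proof.
move=> M_gt0 b_ge0 bM Hq.
rewrite (e_op_vshape M_gt0 b_ge0 bM) => [|t t01]; last first.
  by rewrite /Hfun Hq // pair_h_line_with_height.
eexists => // t t01; rewrite (eq_in_bend _ _ _ Hq) //; last first.
  by rewrite in_itv div_in01 // b_ge0; lra.
rewrite -[X in bend _ _ _ X]scale1r bend_line_with_height.
by rewrite /line_with_height hbend_vshape_e.
Qed.

Lemma iter_f_op_line mu F (M : nat) q : pair_h j mu = M%:R ->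
  {in `[0, 1], q =1 line_path mu F} ->
  exists2 q', iter_op (f_op A a0 j) M q = Some q' &
    {in `[0, 1], q' =1 line_path (refl A a0 j mu) F}.
Proof.
move=> mu_j Hq.
suff /(_ M (leqnn M)) [q' -> Hq'] : forall k, (k <= M)%N ->
    exists2 qk, iter_op (f_op A a0 j) k q = Some qk &
      {in `[0, 1], qk =1 line_with_height mu F (vshape M%:R k%:R)}.
  exists q' => // t t01; rewrite Hq' // -line_with_height_refl.
  apply: eq_in_line_with_height t01 => s; rewrite in_itv mu_j => /andP[_ ?].
  by rewrite vshape_top.
elim=> [|k IH] kM.
  exists q => // t t01; rewrite Hq // -line_with_height_line.
  apply: eq_in_line_with_height t01 => s; rewrite in_itv mu_j => /andP[? _].
  by rewrite vshape_bottom.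
have [qk Eqk Hqk] := IH (ltnW kM).
have [|||q' Eq' Hq'] := f_op_line_with_vshape (M := M%:R) (b := k%:R) _ _ _ Hqk.
- by rewrite ltr0n (leq_ltn_trans _ kM).
- by rewrite ler0n.
- by rewrite natr1 ler_nat.
by exists q'; rewrite /= ?Eqk // -natr1.
Qed.

Lemma iter_e_op_line mu F (M : nat) q : pair_h j mu = - M%:R ->
  {in `[0, 1], q =1 line_path mu F} ->
  exists2 q', iter_op (e_op A a0 j) M q = Some q' &
    {in `[0, 1], q' =1 line_path (refl A a0 j mu) F}.
Proof.
move=> mu_j Hq.
suff /(_ M (leqnn M)) [q' -> Hq'] : forall k, (k <= M)%N ->
    exists2 qk, iter_op (e_op A a0 j) k q = Some qk &
      {in `[0, 1], qk =1 line_with_height mu F (vshape M%:R (M - k)%:R)}.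
  exists q' => // t t01; rewrite Hq' // subnn -line_with_height_refl.
  apply: eq_in_line_with_height t01 => s; rewrite in_itv mu_j => /andP[? _].
  by rewrite vshape_bottom // mulrN opprK.
elim=> [|k IH] kM.
  exists q => // t t01; rewrite Hq // subn0 -line_with_height_line.
  apply: eq_in_line_with_height t01 => s; rewrite in_itv mu_j => /andP[_ ?].
  by rewrite vshape_top // mulrN.
have [qk Eqk] := IH (ltnW kM); rewrite -(subnSK kM) -natr1 => Hqk.
have [|||q' Eq' Hq'] :=
  e_op_line_with_vshape (M := M%:R) (b := (M - k.+1)%:R) _ _ _ Hqk.
- by rewrite ltr0n (leq_ltn_trans _ kM).
- by rewrite ler0n.
- by rewrite natr1 ler_nat subnSK // leq_subr.
by exists q'; rewrite /= ?Eqk.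
Qed.

Lemma S_op_line mu F q : integral_weight mu ->
  {in `[0, 1], q =1 line_path mu F} ->
  exists2 q', S_op A a0 j q = Some q' &
    {in `[0, 1], q' =1 line_path (refl A a0 j mu) F}.
Proof.
move=> mu_int Hq; have [z mu_j] := mu_int j.
have q1 : pair_h j (q 1) = z%:~R.
  by rewrite Hq ?in_itv ?ler01 ?lexx // pair_h_line_path mul1r.
rewrite /S_op q1 numq_int; case: z {q1} mu_j => M mu_j.
  exact: iter_f_op_line.
by apply: (iter_e_op_line (M := M.+1)); first exact: mu_j.
Qed.

Lemma line_path_e_op_or_f_op mu F q : {in `[0, 1], q =1 line_path mu F} ->
  e_op A a0 j q = None \/ f_op A a0 j q = None.
Proof.
move=> Hq; have H t : 0 <= t <= 1 -> Hfun j q t = t * pair_h j mu.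
  by move=> t01; rewrite /Hfun Hq ?in_itv // pair_h_line_path.
have [mu_j_ge0|mu_j_lt0] := leP 0 (pair_h j mu).
  left; rewrite /e_op /minH (@the_min_eq _ 0) ?ltrN10 //; split.
    by exists 0; rewrite H ?lexx ?ler01 // mul0r.
  by move=> _ [t [t01 <-]]; rewrite H //; case/andP: t01 => *; nra.
right; rewrite /f_op /minH (@the_min_eq _ (pair_h j mu)).
  by rewrite H ?lexx ?ler01 // mul1r subrr ltr01.
split; first by exists 1; rewrite H ?lexx ?ler01 // mul1r.
by move=> _ [t [t01 <-]]; rewrite H //; case/andP: t01 => *; nra.
Qed.

End RootOperators.

Lemma S_word_line n (A : 'M[int]_n.+1) a0 nu F w q :
  (forall i, A i i = 2) -> integral_weight nu ->
  S_word A a0 w (line_path nu F) = Some q ->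
  exists2 mu, integral_weight mu & {in `[0, 1], q =1 line_path mu F}.
Proof.
move=> Adiag nu_int; elim: w q => [|j w IH] q /=; first by case=> <-; exists nu.
case Ew: (S_word A a0 w (line_path nu F)) => [q0|] //= Eq.
have [mu mu_int Hq0] := IH q0 Ew.
have [q' Eq' Hq'] := S_op_line a0 (Adiag j) mu_int Hq0.
by exists (refl A a0 j mu); [exact: integral_refl | move: Eq; rewrite Eq' => -[<-]].
Qed.

Unset Implicit Arguments.
Theorem lemma2p28 (n : nat) (A : 'M[int]_n.+1) (a0 : nat)
  (HA : affine_GCM A) (Ha0 : kac_a0 A a0)
  (nu : wt n) (Hnu : in_P a0 nu)
  (F : rat -> rat^o) (HF : piecewise_linear F) (HF0 : F 0 = 0)
  (HF1 : exists z : int, F 1 = z%:~R / a0%:R) :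
  extremal A a0 (fun t : rat => t *: nu + F t *: delta n).
Proof.
(* HF, HF0, HF1 and the delta-part of Hnu only make the path an element of P;
   the argument never needs them. *)
have Adiag : forall i, A i i = 2 by case: HA => -[].
move=> w j q /(S_word_line Adiag (proj1 Hnu)) [mu _ Hq].
exact: (line_path_e_op_or_f_op a0 (Adiag j) Hq).
Qed.
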